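(* Let $\mathcal F\subset\mathcal F_X$ be a set of feasible environments. For each decision rule $p$ and each history $h$, $$\inf_{\mu\in\Delta(\mathcal F(h))}\frac{U_p(\mu,h)}{V(\mu,h)}=\inf_{F\in\mathcal F(h)}\frac{U_p(F,h)}{V(F,h)}.$$
   Context: Sequential search model. Fix a discount factor $\delta\in(0,1)$, a Borel set $X\subset\mathbb{R}_+$ with $0\in X$, and an outside option $x_0>0$. Let $\mathcal F_X$ be the set of Borel probability distributions on $X$ with finite mean (''environments''). A history is $h_t=(x_0,x_1,\dots,x_t)$, $t\ge0$, $x_i\in X$, with best-so-far alternative $y_t=\max\{x_0,\dots,x_t\}$. A decision rule $p$ assigns to each history $h$ a stopping probability $p(h)\in[0,1]$. Given an environment $F$ and a history $h_t$, future alternatives are i.i.d. with law $F$; at each round $s\ge t$ the individual stops with probability $p(h_s)$, and stopping at round $s$ yields $\delta^{s-t}y_s$ (never stopping yields $0$). $U_p(F,h)$ is the expected payoff and $V(F,h)=\sup_pU_p(F,h)$. A prior is a finitely supported probability distribution $\mu$ on $\mathcal F$; $\Delta(\mathcal F)$ is the set of priors, each $F\in\mathcal F$ identified with the point mass on it. An environment or prior is consistent with $h_t$ if the sequence $x_1,\dots,x_t$ occurs with positive probability under it; $\mathcal F(h)$ and $\Delta(\mathcal F(h))$ denote the sets of environments and priors consistent with $h$. For $\mu\in\Delta(\mathcal F(h))$, $U_p(\mu,h)=\sum_F\mu(F\mid h)U_p(F,h)$ where $\mu(\cdot\mid h)$ is the Bayesian posterior given $h$, and $V(\mu,h)=\sup_pU_p(\mu,h)$.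 *)

From HB Require Import structures.
From mathcomp Require Import all_boot all_order all_algebra.
From mathcomp Require Import all_classical all_reals all_analysis.

Unset Printing Implicit Defensive.
Import Order.TTheory GRing.Theory Num.Theory.

Local Open Scope classical_set_scope.
Local Open Scope ring_scope.

Section SequentialSearch.
Context {R : realType}.
Variables (x0 delta : R).

(* An environment: a (Borel) probability distribution on the real line
   (later required to be concentrated on X, with finite mean). *)
Definition env := probability R R.

(* A history h_t = (x_0, x_1, ..., x_t) is represented by the list
   [:: x_1; ...; x_t] (x_0 is the fixed outside option). *)
Definition best (h : seq R) : R := foldr Num.max x0 h.

Definition is_rule (p : seq R -> R) : Prop := forall h, 0 <= p h <= 1.

(* Expected payoff from history h when stopping happens within the next
   n rounds (payoff 0 otherwise), future alternatives i.i.d. F. *)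
Fixpoint Wn (F : env) (p : seq R -> R) (n : nat) (h : seq R) : \bar R :=
  match n with
  | 0%N => (p h * best h)%:E
  | n'.+1 => ((p h * best h)%:E +
              ((1 - p h) * delta)%:E * \int[F]_x Wn F p n' (rcons h x))%E
  end.

(* U_p(F,h): expected payoff (never stopping yields 0), as the monotone
   limit of the horizon-n truncations. *)
Definition U (F : env) (p : seq R -> R) (h : seq R) : \bar R :=
  ereal_sup (range (fun n => Wn F p n h)).

Definition V (F : env) (h : seq R) : \bar R :=
  ereal_sup [set U F p h | p in is_rule].

Definition lik (F : env) (h : seq R) : R :=
  \prod_(x <- h) fine (F [set x]).

(* A finitely supported prior: finitely many environments with weights. *)
Record prior := Prior {
  psize : nat;
  penv : 'I_psize -> env;
  pw : 'I_psize -> R }.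
Arguments penv : clear implicits.
Arguments pw : clear implicits.

Definition is_prior (Fs : set env) (mu : prior) : Prop :=
  (forall i, Fs (penv mu i)) /\ (forall i, 0 <= pw mu i) /\
  \sum_(i < psize mu) pw mu i = 1.

Definition mlik (mu : prior) (h : seq R) : R :=
  \sum_(i < psize mu) pw mu i * lik (penv mu i) h.

Definition post (mu : prior) (h : seq R) (i : 'I_(psize mu)) : R :=
  pw mu i * lik (penv mu i) h / mlik mu h.

Definition Umu (mu : prior) (p : seq R -> R) (h : seq R) : \bar R :=
  (\sum_(i < psize mu) (post mu h i)%:E * U (penv mu i) p h)%E.

Definition Vmu (mu : prior) (h : seq R) : \bar R :=
  ereal_sup [set Umu mu p h | p in is_rule].

Definition pratio (a b : \bar R) : \bar R := (fine a / fine b)%:E.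

Definition consistent_envs (Fs : set env) (h : seq R) : set env :=
  [set F | Fs F /\ 0 < lik F h].

Definition consistent_priors (Fs : set env) (h : seq R) : set prior :=
  [set mu | is_prior Fs mu /\ 0 < mlik mu h].

End SequentialSearch.

(* A fixed decision rule earns, under a prior, the posterior average of what
   it earns in each environment, whereas the best rule under the prior earns
   at most the posterior average of the environment-wise optimal values
   V(F,h).  Hence U_p(mu,h)/V(mu,h) is at least the smallest ratio
   U_p(F,h)/V(F,h) over the environments charged by the posterior, and point
   masses show that priors cannot do better than single environments.  The
   only analytic input is that U and V are finite, by the finite mean of F
   and delta < 1, and that V(F,h) >= x0 > 0. *)
From HB Require Import structures.
From mathcomp Require Import all_boot all_order all_algebra.
From mathcomp Require Import all_classical all_reals all_analysis.
From mathcomp Require Import lra.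
Import Order.TTheory GRing.Theory Num.Theory.
Local Open Scope classical_set_scope.
Local Open Scope ring_scope.

(* No measurability is needed: the integral of a nonnegative function is the
   supremum of the integrals of the simple functions below it. *)
Lemma ge0_le_integralT d (T : measurableType d) (R : realType)
    (mu : {measure set T -> \bar R}) (f g : T -> \bar R) :
  (forall x, 0 <= f x)%E -> (forall x, f x <= g x)%E ->
  (\int[mu]_x f x <= \int[mu]_x g x)%E.
Proof.
move=> f_ge0 le_fg.
have g_ge0 x : (0 <= g x)%E by exact: le_trans (f_ge0 x) (le_fg x).
rewrite !ge0_integralTE //.
apply: ereal_sup_le => _ [s s_le_f <-]; exists s => //= x.
exact: le_trans (s_le_f x) (le_fg x).
Qed.

Lemma mixture_ratio_ge (R : realFieldType) (I : finType) (w u v : I -> R)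
    (c rho : R) :
  0 < c -> (forall i, 0 <= w i) -> (forall i, 0 <= u i) ->
  c <= \sum_i w i * v i -> (forall i, 0 < w i -> rho * v i <= u i) ->
  rho <= (\sum_i w i * u i) / c.
Proof.
move=> c_gt0 w_ge0 u_ge0 c_le ratio_ge; rewrite ler_pdivlMr //.
have [rho_le0|rho_gt0] := leP rho 0.
  apply: le_trans (sumr_ge0 _ (fun i _ => mulr_ge0 (w_ge0 i) (u_ge0 i))).
  by rewrite mulr_le0_ge0 // ltW.
apply: le_trans (ler_wpM2l (ltW rho_gt0) c_le) _.
rewrite mulr_sumr; apply: ler_sum => i _; rewrite mulrCA.
have [w_gt0|w_le0] := ltP 0 (w i).
  by apply: ler_wpM2l; [exact: ltW | exact: ratio_ge].
have -> : w i = 0 by apply/eqP; rewrite eq_le w_le0 w_ge0.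
by rewrite !mul0r.
Qed.

Section Values.
Context {R : realType}.
Variables (x0 delta : R).
Hypothesis x0_gt0 : 0 < x0.
Hypothesis delta_ge0 : 0 <= delta.
Hypothesis delta_lt1 : delta < 1.

Let integrable_id (F : env) := F.-integrable setT (fun x : R => x%:E).

Lemma x0_le_best h : x0 <= best x0 h.
Proof. by elim: h => [|a h IH] //=; rewrite le_max IH orbT. Qed.

Lemma best_gt0 h : 0 < best x0 h.
Proof. exact: lt_le_trans x0_gt0 (x0_le_best h). Qed.

Lemma best_rcons h x : best x0 (rcons h x) = Num.max (best x0 h) x.
Proof.
by rewrite /best; elim: h => [|a h IH] /=; [rewrite maxC | rewrite IH maxA].
Qed.

Lemma Wn_ge0 F p n h : is_rule p -> (0 <= Wn x0 delta F p n h)%E.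
Proof.
move=> p_rule; elim: n h => [|n IH] h /=; have /andP[p_ge0 p_le1] := p_rule h;
  have b_ge0 := ltW (best_gt0 h).
  by rewrite lee_fin mulr_ge0.
apply: adde_ge0; first by rewrite lee_fin mulr_ge0.
apply: mule_ge0; first by rewrite lee_fin mulr_ge0 ?subr_ge0.
by apply: integral_ge0 => x _; exact: IH.
Qed.

Lemma Wn_le_U F p n h : (Wn x0 delta F p n h <= U x0 delta F p h)%E.
Proof. by apply: ereal_sup_ubound; exists n. Qed.

Lemma U_ge0 F p h : is_rule p -> (0 <= U x0 delta F p h)%E.
Proof. by move=> p_rule; apply: le_trans (Wn_le_U F p 0 h); exact: Wn_ge0. Qed.

Lemma U_le_V F p h : is_rule p -> (U x0 delta F p h <= V x0 delta F h)%E.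
Proof. by move=> p_rule; apply: ereal_sup_ubound; exists p. Qed.

Lemma stop_rule : @is_rule R (fun _ => 1).
Proof. by move=> h; rewrite lexx ler01. Qed.

Lemma best_le_U_stop F h : ((best x0 h)%:E <= U x0 delta F (fun _ => 1%R) h)%E.
Proof. by apply: le_trans (Wn_le_U _ _ 0 h); rewrite /= mul1r. Qed.

Lemma best_le_V F h : ((best x0 h)%:E <= V x0 delta F h)%E.
Proof. exact: le_trans (best_le_U_stop F h) (U_le_V F _ h stop_rule). Qed.

(* Induction on n: each further round adds at most the mean m of |x| to the
   best alternative, and the discount absorbs it because delta (m + K) <= K. *)
Lemma Wn_le_best_add F p n h (m K : R) :
  is_rule p -> integrable_id F -> (\int[F]_x `|x%:E| = m%:E)%E ->
  delta * (m + K) <= K -> 0 <= K ->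
  (Wn x0 delta F p n h <= (best x0 h + K)%:E)%E.
Proof.
move=> p_rule F_int Fm K_fix K_ge0.
have /integrableP[abs_meas _] := integrable_abse F_int.
elim: n h => [|n IH] h /=; have /andP[p_ge0 p_le1] := p_rule h;
  have b_ge0 := ltW (best_gt0 h).
  by rewrite lee_fin; nra.
set b := best x0 h.
have int_le : (\int[F]_x Wn x0 delta F p n (rcons h x) <= (b + K + m)%:E)%E.
  apply: (@le_trans _ _ (\int[F]_x ((b + K)%:E + `|x%:E|))%E).
    apply: ge0_le_integralT => x; first exact: Wn_ge0.
    apply: le_trans (IH _) _; rewrite best_rcons -/b lee_fin.
    rewrite addrAC lerD2r ge_max lerDl normr_ge0 /=.
    by rewrite -[leLHS]add0r lerD ?ler_norm.
  rewrite ge0_integralD //; last by move=> *; rewrite lee_fin addr_ge0.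
  have := integral_cst F (@measurableT _ R) (b + K)%:E; rewrite /cst => ->.
  rewrite [X in (_ * X + _)%E](_ : _ = 1%E); last exact: probability_setT.
  by rewrite mule1 Fm -EFinD.
have c_ge0 : 0 <= (1 - p h) * delta by rewrite mulr_ge0 ?subr_ge0.
apply: le_trans (leeD2l _ (lee_wpmul2l _ int_le)) _; first by rewrite lee_fin.
rewrite -EFinM -EFinD lee_fin.
have slack_best : 0 <= (1 - p h) * (b * (1 - delta)).
  by rewrite !mulr_ge0 ?subr_ge0 // ltW.
have slack_K : 0 <= (1 - p h) * (K - delta * (m + K)).
  by rewrite !mulr_ge0 ?subr_ge0.
nra.
Qed.

Lemma U_bounded F h : integrable_id F ->
  exists B : R, forall p, is_rule p -> (U x0 delta F p h <= B%:E)%E.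
Proof.
move=> F_int; have /integrableP[_ abs_fin] := F_int.
set m := fine (\int[F]_x `|x%:E|)%E.
have Fm : (\int[F]_x `|x%:E| = m%:E)%E.
  by rewrite /m fineK // ge0_fin_numE // integral_ge0.
have m_ge0 : 0 <= m by rewrite /m fine_ge0 // integral_ge0.
have delta_lt1' : 0 < 1 - delta by rewrite subr_gt0.
pose K := delta * m / (1 - delta).
have K_ge0 : 0 <= K by rewrite divr_ge0 ?mulr_ge0 // ltW.
have K_fix : delta * (m + K) <= K.
  have : K * (1 - delta) = delta * m by rewrite mulfVK // gt_eqF.
  nra.
exists (best x0 h + K) => p p_rule.
by apply: ge_ereal_sup => _ [n _ <-]; exact: (Wn_le_best_add F p n h m K).
Qed.

Lemma U_fin_num F p h : integrable_id F -> is_rule p ->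
  U x0 delta F p h \is a fin_num.
Proof.
move=> F_int p_rule; have [B U_le] := U_bounded F h F_int.
by rewrite ge0_fin_numE ?U_ge0 // (le_lt_trans (U_le p p_rule)) ?ltry.
Qed.

Lemma V_fin_num F h : integrable_id F -> V x0 delta F h \is a fin_num.
Proof.
move=> F_int; have [B U_le] := U_bounded F h F_int.
have V_ge0 : (0 <= V x0 delta F h)%E.
  by apply: le_trans (best_le_V F h); rewrite lee_fin ltW ?best_gt0.
rewrite ge0_fin_numE // (@le_lt_trans _ _ B%:E) ?ltry //.
by apply: ge_ereal_sup => _ [p p_rule <-]; exact: U_le.
Qed.

Lemma fine_V_gt0 F h : integrable_id F -> 0 < fine (V x0 delta F h).
Proof.
move=> F_int; rewrite -lte_fin fineK ?V_fin_num //.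
by apply: lt_le_trans (best_le_V F h); rewrite lte_fin best_gt0.
Qed.

Lemma lik_ge0 (F : @env R) h : 0 <= lik F h.
Proof. by apply: prodr_ge0 => x _; apply: fine_ge0; exact: measure_ge0. Qed.

Definition point_prior (F : @env R) : @prior R :=
  @Prior R 1 (fun _ => F) (fun _ => 1).

Lemma Umu_point_prior F p h : 0 < lik F h ->
  Umu x0 delta (point_prior F) p h = U x0 delta F p h.
Proof.
move=> lik_gt0; rewrite /Umu big_ord1 /post /mlik big_ord1 /= mul1r.
by rewrite divff ?gt_eqF // mul1e.
Qed.

Lemma Vmu_point_prior F h : 0 < lik F h ->
  Vmu x0 delta (point_prior F) h = V x0 delta F h.
Proof.
move=> lik_gt0; congr ereal_sup.
by apply: eq_imagel => p _; exact: Umu_point_prior.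
Qed.

Lemma point_prior_consistent Fs F h : consistent_envs Fs h F ->
  consistent_priors Fs h (point_prior F).
Proof.
case=> Fs_F lik_gt0; split; last by rewrite /mlik big_ord1 /= mul1r.
by split=> //; split=> //; rewrite big_ord1.
Qed.

Section Posterior.
Variables (Fs : set (@env R)) (mu : @prior R) (h : seq R).
Hypothesis mu_prior : is_prior Fs mu.
Hypothesis mlik_gt0 : 0 < mlik mu h.
Hypothesis Fs_integrable : forall F, Fs F -> integrable_id F.

Let atom_integrable i : integrable_id (penv mu i).
Proof. by apply: Fs_integrable; case: mu_prior. Qed.

Lemma post_ge0 i : 0 <= post mu h i.
Proof.
case: mu_prior => _ [w_ge0 _].
by rewrite /post divr_ge0 ?mulr_ge0 ?lik_ge0 // ltW.
Qed.

Lemma sum_post : \sum_i post mu h i = 1.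
Proof. by rewrite -mulr_suml divff // gt_eqF. Qed.

Lemma post_gt0_lik i : 0 < post mu h i -> 0 < lik (penv mu i) h.
Proof.
move=> post_gt0; rewrite lt_def lik_ge0 andbT.
by apply: contraTneq post_gt0 => lik0; rewrite /post lik0 mulr0 mul0r ltxx.
Qed.

Lemma exists_consistent_atom : exists i, consistent_envs Fs h (penv mu i).
Proof.
have [i _ post_gt0] : exists2 i, true & 0 < post mu h i.
  apply/exists_inP; apply: contraT.
  rewrite negb_exists_in => /forall_inP post_le0.
  have : \sum_i post mu h i <= 0.
    by apply: sumr_le0 => i _; rewrite leNgt post_le0.
  by rewrite sum_post ler10.
by exists i; split; [case: mu_prior | exact: post_gt0_lik].
Qed.

Lemma Umu_sum p : is_rule p -> Umu x0 delta mu p h =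
  (\sum_i post mu h i * fine (U x0 delta (penv mu i) p h))%:E.
Proof.
move=> p_rule; rewrite /Umu -sumEFin; apply: eq_bigr => i _.
by rewrite [RHS]EFinM fineK ?U_fin_num.
Qed.

(* The value of information: a rule chosen knowing the environment does at
   least as well as one rule chosen for the whole prior. *)
Lemma Vmu_le_sum : (Vmu x0 delta mu h <=
  (\sum_i post mu h i * fine (V x0 delta (penv mu i) h))%:E)%E.
Proof.
apply: ge_ereal_sup => _ [p p_rule <-]; rewrite Umu_sum // lee_fin.
apply: ler_sum => i _; apply: ler_wpM2l; first exact: post_ge0.
by rewrite -lee_fin !fineK ?U_fin_num ?V_fin_num // U_le_V.
Qed.

Lemma best_le_Vmu : ((best x0 h)%:E <= Vmu x0 delta mu h)%E.
Proof.
apply: le_trans (ereal_sup_ubound _); last first.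
  by exists (fun _ => 1); first exact: stop_rule.
rewrite (Umu_sum _ stop_rule) lee_fin -[leLHS]mul1r.
rewrite -[X in X * _ <= _]sum_post mulr_suml.
apply: ler_sum => i _; apply: ler_wpM2l; first exact: post_ge0.
rewrite -lee_fin fineK ?best_le_U_stop //.
exact: U_fin_num _ _ _ (atom_integrable i) stop_rule.
Qed.

Lemma Vmu_fin_num : Vmu x0 delta mu h \is a fin_num.
Proof.
rewrite ge0_fin_numE; first exact: le_lt_trans Vmu_le_sum (ltry _).
by apply: le_trans best_le_Vmu; rewrite lee_fin ltW ?best_gt0.
Qed.

Lemma fine_Vmu_gt0 : 0 < fine (Vmu x0 delta mu h).
Proof.
rewrite -lte_fin fineK ?Vmu_fin_num //.
by apply: lt_le_trans best_le_Vmu; rewrite lte_fin best_gt0.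
Qed.

Lemma env_ratio_inf_le_prior_ratio p : is_rule p ->
  (ereal_inf [set pratio (U x0 delta F p h) (V x0 delta F h)
             | F in consistent_envs Fs h]
   <= pratio (Umu x0 delta mu p h) (Vmu x0 delta mu h))%E.
Proof.
move=> p_rule; set S := [set _ | F in _].
have inf_le i : consistent_envs Fs h (penv mu i) -> (ereal_inf S <=
    pratio (U x0 delta (penv mu i) p h) (V x0 delta (penv mu i) h))%E.
  by move=> consistent_i; apply: ereal_inf_lbound; exists (penv mu i).
have [i consistent_i] := exists_consistent_atom.
move: inf_le (inf_le i consistent_i); case: (ereal_inf S) => [rho | | ] inf_le.
- move=> _; rewrite /pratio Umu_sum // lee_fin.
  apply: mixture_ratio_ge; [exact: fine_Vmu_gt0 | exact: post_ge0 | | | ].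
  + by move=> j; rewrite fine_ge0 ?U_ge0.
  + by rewrite -lee_fin fineK ?Vmu_fin_num //; exact: Vmu_le_sum.
  move=> j /post_gt0_lik lik_gt0.
  have consistent_j : consistent_envs Fs h (penv mu j).
    by split=> //; case: mu_prior.
  by have := inf_le j consistent_j; rewrite lee_fin ler_pdivlMr ?fine_V_gt0.
- by rewrite /pratio leye_eq.
- by move=> _; rewrite leNye.
Qed.

End Posterior.
End Values.

Theorem proposition1 (R : realType) (delta x0 : R) (X : set R)
  (Fs : set (@env R)) (p : seq R -> R) (h : seq R) :
  0 < delta < 1 ->
  measurable X -> X `<=` [set x | 0 <= x] -> X 0 ->
  0 < x0 ->
  (forall F, Fs F -> F X = 1%E /\ F.-integrable setT (fun x => x%:E)) ->
  is_rule p ->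
  (forall x, x \in h -> X x) ->
  ereal_inf [set pratio (Umu x0 delta mu p h) (Vmu x0 delta mu h)
            | mu in consistent_priors Fs h]
  = ereal_inf [set pratio (U x0 delta F p h) (V x0 delta F h)
              | F in consistent_envs Fs h].
Proof.
move=> /andP[delta_gt0 delta_lt1] _ _ _ x0_gt0 Fs_env p_rule _.
have Fs_integrable F : Fs F -> F.-integrable setT (fun x => x%:E).
  by move=> /Fs_env[].
apply/eqP; rewrite eq_le; apply/andP; split.
  apply: ereal_inf_le_tmp => _ [F consistent_F <-].
  exists (point_prior F); first exact: point_prior_consistent.
  by case: consistent_F => _ lik_gt0; rewrite Umu_point_prior ?Vmu_point_prior.
apply: le_ereal_inf_tmp => _ [mu [mu_prior mlik_gt0] <-].
exact: (env_ratio_inf_le_prior_ratio _ _ x0_gt0 (ltW delta_gt0) delta_lt1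
  _ _ _ mu_prior mlik_gt0 Fs_integrable _ p_rule).
Qed.
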